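(* Let $R$ be a finite rod set not equivalent to the empty rod set, and let $m=\max R$. The following are equivalent: (1) the sequence $(F(n,R))_{n\ge0}$ is eventually periodic, i.e. there are $p>0$ and $N\ge0$ with $F(n+p,R)=F(n,R)$ for all $n\ge N$; (2) $(F(n,R))_{n\ge0}$ is bounded; (3) there exist $0\le a<a'$ with $F(a+j,R)=F(a'+j,R)$ for $j=0,1,\dots,m-1$; (4) there is $p>0$ with $F(n+p,R)=F(n,R)$ for all $n\ge0$; (5) the polynomial $1-C(x,R)$ divides $1-x^p$ in $\mathbb Z[x]$ for some $p\ge1$; (6) $1-C(x,R)$ equals $\pm$ a product of distinct cyclotomic polynomials; (7) there is $m'\ge1$ such that $G(x,R)=\dfrac{q(x)}{1-x^{m'}}$ with $q(x)=\sum_{k=0}^{m'-1}F(k,R)x^k$.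
   Context: A rod is a triple $(r,c,\varepsilon)$ with $r$ a positive integer (length), $c$ a tag (color), $\varepsilon\in\{\pm1\}$ (sign); antirods have sign $-1$. A rod set is a set of rods with finitely many of each length. $C(n,R)$ = (number of positive rods of length $n$) $-$ (number of antirods of length $n$); $R\equiv S$ means $C(n,R)=C(n,S)$ for all $n>0$; each class has a unique reduced member (no rod and antirod of the same length). $R$ is finite if its reduced equivalent is finite, and $\max R$ is the largest length in it. A train built from $R$ is a finite sequence of rods of $R$ (including the empty train), with length the sum of lengths and sign the product of signs; $F(n,R)$ is the number of positive trains of length $n$ minus the number of negative ones ($F(0,R)=1$). $C(x,R)=\sum_{n>0}C(n,R)x^n$ (a polynomial when $R$ is finite) and $G(x,R)=\sum_{n\ge0}F(n,R)x^n$. *)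

From mathcomp Require Import all_boot all_algebra.
From mathcomp Require Import cyclotomic.
Set Implicit Arguments. Unset Strict Implicit. Unset Printing Implicit Defensive.
Import GRing.Theory.
Local Open Scope ring_scope.

(* A rod is a triple (length, colour, sign); sign is encoded by a boolean
   [neg] : [false] = +1 (rod), [true] = -1 (antirod).  A rod set over a colour
   type [T] is given length by length: [rods n] lists the pairs (colour, sign)
   of the rods of length [n]; it is duplicate-free (it is a set of triples),
   finite for each length, and empty at length 0 (lengths are positive). *)
Record rodset (T : eqType) := RodSet {
  rods : nat -> seq (T * bool);
  rods_uniq : forall n, uniq (rods n);
  rods0 : rods 0%N = [::] }.

Definition rod (T : eqType) : Type := (nat * T * bool)%type.

Definition Crod (T : eqType) (R : rodset T) (n : nat) : int :=
  (count (fun cs : T * bool => ~~ cs.2) (rods R n))%:Z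
  - (count (fun cs : T * bool => cs.2) (rods R n))%:Z.

(* Enumeration of all trains (finite sequences of rods of R) of total length n.
   [fuel] only guarantees termination; [trains R n] uses fuel n, which suffices
   since every rod has positive length. *)
Fixpoint trains_aux (T : eqType) (R : rodset T) (fuel n : nat) : seq (seq (rod T)) :=
  if n == 0%N then [:: [::]] else
  match fuel with
  | 0%N => [::]
  | f.+1 => flatten [seq [seq ((k, cs.1, cs.2) : rod T) :: t
                           | cs <- rods R k, t <- trains_aux R f (n - k)]
                     | k <- iota 1 n]
  end.

Definition trains (T : eqType) (R : rodset T) (n : nat) := trains_aux R n n.

Definition train_len (T : eqType) (t : seq (rod T)) : nat :=
  \sum_(r <- t) r.1.1.

Definition train_sign (T : eqType) (t : seq (rod T)) : int :=
  (-1) ^+ count (fun r : rod T => r.2) t.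

Definition Frod (T : eqType) (R : rodset T) (n : nat) : int :=
  \sum_(t <- trains R n) train_sign t.

Definition Cpoly (T : eqType) (R : rodset T) (m : nat) : {poly int} :=
  \poly_(i < m.+1) Crod R i.

Definition series := nat -> int.
Definition series_of_poly (p : {poly int}) : series := fun n => p`_n.
Definition mul_series (a b : series) : series :=
  fun n => \sum_(i < n.+1) a i * b (n - i)%N.
Definition Gseries (T : eqType) (R : rodset T) : series := fun n => Frod R n.
(* 1/(1 - x^k) = sum_j x^(jk) as a formal power series (k >= 1) *)
Definition inv_one_sub_Xn (k : nat) : series :=
  fun n => if (k %| n)%N then 1 else 0.

(* Splitting off the first rod of a train shows (1 - C(x)) G(x) = 1, i.e. F obeys
   a linear recurrence of order m = max R whose last coefficient C(m) is nonzero.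
   Such a recurrence can be run backwards as well as forwards, so two equal
   windows of m consecutive values force pure periodicity; boundedness yields
   two equal windows by pigeonhole.  Period p means (1 - x^p) G(x) is a
   polynomial of degree < p, i.e. 1 - C(x) divides 1 - x^p = -prod_(d | p) Phi_d.
   Over the algebraic numbers the Phi_d are pairwise coprime minimal polynomials,
   so such a divisor with constant term 1 is +-1 times a product of distinct
   Phi_d; conversely such a product divides 1 - x^p for p the product of the d. *)

From mathcomp Require Import all_boot all_algebra all_field.
From mathcomp Require Import cyclotomic zify ring lra.
From Stdlib Require Import FunctionalExtensionality.
Import GRing.Theory Num.Theory.
Set Implicit Arguments. Unset Strict Implicit. Unset Printing Implicit Defensive.
Local Open Scope ring_scope.

Definition periodic (V : Type) (f : nat -> V) (p : nat) :=
  forall n, f (n + p)%N = f n.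

Lemma periodic_mod (V : Type) (f : nat -> V) p :
  (0 < p)%N -> periodic f p -> forall n, f n = f (n %% p)%N.
Proof.
move=> p_gt0 fp n; rewrite {1}(divn_eq n p); elim: (n %/ p)%N => [|k IHk].
  by rewrite mul0n add0n.
by rewrite mulSn -addnA addnC fp.
Qed.

Lemma eventually_periodic_bounded (R : numDomainType) (f : nat -> R) p N :
  (0 < p)%N -> (forall n, (N <= n)%N -> f (n + p)%N = f n) ->
  exists B : R, forall n, `|f n| <= B.
Proof.
move=> p_gt0 fp; exists (\sum_(i < N + p) `|f i|).
elim/ltn_ind => n IHn; have [n_small|n_large] := ltnP n (N + p).
  rewrite (bigD1 (Ordinal n_small)) //= lerDl.
  by apply: sumr_ge0 => i _; apply: normr_ge0.
have le_pn : (p <= n)%N by lia.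
by rewrite -(subnK le_pn) fp; [apply: IHn | ]; lia.
Qed.

(* Pigeonhole on the windows [f a, ..., f (a + m - 1)], which take finitely
   many values since [f] is bounded. *)
Lemma bounded_window_repeats (f : nat -> int) (m : nat) (B : int) :
  (forall n, `|f n| <= B) ->
  exists a a', (a < a')%N /\ forall j, (j < m)%N -> f (a + j)%N = f (a' + j)%N.
Proof.
move=> fB; pose M := (2 * absz B)%N.
pose enc (x : int) : 'I_M.+1 := inord (absz (x + B)).
have encK x : `|x| <= B -> (enc x)%:Z - B = x.
  rewrite ler_norml => /andP[lo hi]; rewrite /enc inordK; last by lia.
  by rewrite gez0_abs ?addrK //; lra.
pose window (a : 'I_#|{ffun 'I_m -> 'I_M.+1}|.+1) :=
  [ffun j : 'I_m => enc (f (a + j)%N)].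
have /injectivePn [a [a' neq_aa' eq_w]] : ~~ injectiveb window.
  by apply/injectiveP => /leq_card; rewrite card_ord ltnn.
have eq_f j : (j < m)%N -> f (a + j)%N = f (a' + j)%N.
  move=> jm; have := congr1 (fun w : {ffun 'I_m -> 'I_M.+1} => (w (Ordinal jm))%:Z - B) eq_w.
  by rewrite !ffunE !encK.
have [lt_aa'|lt_a'a|/val_inj eq_aa'] := ltngtP a a'.
- by exists a, a'.
- by exists a', a; split=> // j jm; rewrite eq_f.
- by rewrite eq_aa' eqxx in neq_aa'.
Qed.

Lemma mul_series_inv_one_sub_Xn (f : nat -> int) p n : (0 < p)%N ->
  mul_series (series_of_poly (\poly_(k < p) f k)) (inv_one_sub_Xn p) n =
  f (n %% p)%N.
Proof.
move=> p_gt0; rewrite /mul_series /series_of_poly /inv_one_sub_Xn.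
have mod_le : (n %% p < n.+1)%N by rewrite ltnS leq_mod.
rewrite (bigD1 (Ordinal mod_le)) //= coef_poly ltn_pmod //.
rewrite {2}(divn_eq n p) addnK dvdn_mull // mulr1 big1 ?addr0 // => -[i lt_in] /=.
rewrite coef_poly -val_eqE /=; case: ltnP => [lt_ip|]; last by rewrite mul0r.
case: dvdnP => [[k n_eq]|]; last by rewrite mulr0.
have -> : n = (k * p + i)%N by rewrite -n_eq subnK // -ltnS.
by rewrite modnMDl modn_small // eqxx.
Qed.

Section ReversibleRecurrence.
Variables (R : idomainType) (c f : nat -> R) (m : nat).
Hypotheses (m_gt0 : (0 < m)%N) (cm_neq0 : c m != 0).
Hypothesis f_rec : forall n, f (n + m)%N = \sum_(i < m) c i.+1 * f (n + (m - i.+1))%N.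

Definition windows_agree a b := forall j, (j < m)%N -> f (a + j)%N = f (b + j)%N.

Lemma windows_agreeS a b : windows_agree a b -> windows_agree a.+1 b.+1.
Proof.
move=> ab j jm; rewrite !addSnnS; have [/ab //|] := ltnP j.+1 m.
rewrite leq_eqVlt ltnNge jm orbF => /eqP <-; rewrite !f_rec.
by apply: eq_bigr => i _; rewrite ab // ltn_subrL m_gt0.
Qed.

(* Reversibility: the last coefficient [c m] is cancellable. *)
Lemma windows_agreeSK a b : windows_agree a.+1 b.+1 -> windows_agree a b.
Proof.
move=> ab [|j] jm; last by rewrite -!addSnnS ab // ltnW.
have last_ord : (m.-1 < m)%N by rewrite ltn_predL.
have eq_fm : f (a + m)%N = f (b + m)%N.
  by rewrite -(prednK m_gt0) -!addSnnS ab.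
have : \sum_(i < m) c i.+1 * (f (a + (m - i.+1))%N - f (b + (m - i.+1))%N) = 0.
  by under eq_bigr do rewrite mulrBr; rewrite sumrB -!f_rec eq_fm subrr.
rewrite (bigD1 (Ordinal last_ord)) //= big1 => [|i]; last first.
  rewrite -val_eqE /= => /eqP neq_i; have lt_im : (i.+1 < m)%N by have := ltn_ord i; lia.
  by rewrite -(subnSK lt_im) !addnS -!addSn ab ?subrr ?mulr0 //; lia.
rewrite prednK // subnn !addn0 addr0 => /eqP.
by rewrite mulf_eq0 (negbTE cm_neq0) subr_eq0 => /eqP.
Qed.

Lemma windows_agree_shift a b : windows_agree a b -> forall n, f (a + n)%N = f (b + n)%N.
Proof.
move=> ab n; have : windows_agree (a + n) (b + n).
  by elim: n => [|n IHn]; rewrite ?addn0 // !addnS; apply: windows_agreeS.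
by move/(_ 0%N m_gt0); rewrite !addn0.
Qed.

Lemma windows_agree_unshift k a b : windows_agree (k + a) (k + b) -> windows_agree a b.
Proof. by elim: k => [|k IHk]; rewrite ?addSn // => /windows_agreeSK/IHk. Qed.

Lemma windows_agree_periodic a b :
  (a < b)%N -> windows_agree a b -> periodic f (b - a).
Proof.
move=> lt_ab ab; have : windows_agree (a + 0) (a + (b - a)).
  by rewrite addn0 subnKC // ltnW.
by move/windows_agree_unshift/windows_agree_shift => f0 n; rewrite addnC -f0.
Qed.

End ReversibleRecurrence.

Lemma coefM_delta_low (R : nzSemiRingType) (r s : {poly R}) n :
  (forall i, (i <= n)%N -> r`_i = (i == 0%N)%:R) -> (r * s)`_n = s`_n.
Proof.
move=> r_delta; rewrite coefM big_ord_recl r_delta // mul1r subn0.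
by rewrite big1 ?addr0 // => i _; rewrite /= r_delta // mulr0n mul0r.
Qed.

Lemma coefM_eq_low (R : nzSemiRingType) (a b c : {poly R}) N n :
  (forall i, (i < N)%N -> a`_i = b`_i) -> (n < N)%N -> (a * c)`_n = (b * c)`_n.
Proof.
move=> eq_ab lt_nN; rewrite !coefM; apply: eq_bigr => j _; rewrite eq_ab //.
exact: leq_ltn_trans (ltnSE (ltn_ord j)) lt_nN.
Qed.

Section SeriesInverse.
Variables (R : idomainType) (P : {poly R}) (f : nat -> R).
Hypothesis f_inv : forall n, \sum_(j < n.+1) P`_j * f (n - j)%N = (n == 0%N)%:R.

Lemma coefM_poly_inv N n : (n < N)%N -> (P * \poly_(i < N) f i)`_n = (n == 0%N)%:R.
Proof.
move=> lt_nN; rewrite coefM -f_inv; apply: eq_bigr => j _.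
by rewrite coef_poly (leq_ltn_trans (leq_subr _ _) lt_nN).
Qed.

Lemma periodic_one_sub_Xn p : periodic f p -> 1 - 'X^p = (\poly_(k < p) f k) * P.
Proof.
move=> fp; apply/polyP => n.
rewrite (@coefM_eq_low _ _ ((1 - 'X^p) * \poly_(i < n.+1) f i) _ n.+1) //.
  rewrite -mulrA (mulrC (\poly_(i < _) _)) (mulrC (1 - _)) coefM_delta_low //.
  by move=> i lt_in; rewrite coefM_poly_inv.
move=> i lt_in; rewrite mulrBl mul1r coefB coefXnM !coef_poly lt_in.
case: ltnP => [_|le_pi]; first by rewrite subr0.
by rewrite (leq_ltn_trans (leq_subr _ _) lt_in) -{1}(subnK le_pi) fp subrr.
Qed.

Lemma one_sub_Xn_periodic p q : (1 < size P)%N -> (0 < p)%N ->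
  1 - 'X^p = q * P -> periodic f p.
Proof.
move=> P_nconst p_gt0 eq_qP n.
have size_one_sub : size (1 - 'X^p : {poly R}) = p.+1.
  by rewrite -opprB size_polyN size_XnsubC.
have /norP[q_neq0 P_neq0] : ~~ ((q == 0) || (P == 0)).
  by rewrite -mulf_eq0 -eq_qP -size_poly_eq0 size_one_sub.
have size_q : (size q <= p)%N.
  move: (size_mul q_neq0 P_neq0); rewrite -eq_qP size_one_sub.
  by case: (size P) P_nconst => // k k_gt0; rewrite addnS /=; lia.
have : ((1 - 'X^p) * \poly_(i < (n + p).+1) f i)`_(n + p) = q`_(n + p).
  rewrite eq_qP -mulrA mulrC coefM_delta_low // => i le_i.
  by rewrite coefM_poly_inv.
rewrite mulrBl mul1r coefB coefXnM ltnNge leq_addl /= addnK !coef_poly !ltnS.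
rewrite leqnn leq_addr nth_default ?(leq_trans size_q (leq_addl _ _)) //.
by move/eqP; rewrite subr_eq0 => /eqP.
Qed.

End SeriesInverse.

Section CoprimeProducts.
Variables (F : fieldType) (I : eqType).

Lemma coprimep_prodr (p : {poly F}) (s : seq I) (q : I -> {poly F}) :
  {in s, forall i, coprimep p (q i)} -> coprimep p (\prod_(i <- s) q i).
Proof.
elim: s => [|i s IHs] cop_pq; first by rewrite big_nil coprimep1.
rewrite big_cons coprimepMr cop_pq ?mem_head // IHs // => j js.
by rewrite cop_pq // in_cons js orbT.
Qed.

Lemma pairwise_coprimep_prod_dvdp (s : seq I) (q : I -> {poly F}) (Q : {poly F}) :
  uniq s -> {in s &, forall i j, i != j -> coprimep (q i) (q j)} ->
  {in s, forall i, q i %| Q} -> \prod_(i <- s) q i %| Q.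
Proof.
elim: s => [|i s IHs] /=; first by rewrite big_nil dvd1p.
move=> /andP[i_notin_s s_uniq] cop_q dvd_qQ; rewrite big_cons Gauss_dvdp.
  rewrite dvd_qQ ?mem_head //= IHs // => [j k js ks|j js]; last first.
    by rewrite dvd_qQ // in_cons js orbT.
  by apply: cop_q; rewrite in_cons ?js ?ks orbT.
apply: coprimep_prodr => j js; apply: cop_q; rewrite ?mem_head ?in_cons ?js ?orbT //.
by apply: contraNneq i_notin_s => ->.
Qed.

End CoprimeProducts.

Lemma not_coprimep_common_root (F : closedFieldType) (p q : {poly F}) :
  ~~ coprimep p q -> exists z, root p z && root q z.
Proof. by rewrite coprimep_def => /closed_rootP [z]; rewrite root_gcd; exists z. Qed.

Lemma primitive_root_order_inj (R : nzRingType) d e (z : R) :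
  d.-primitive_root z -> e.-primitive_root z -> d = e.
Proof.
move=> prim_d prim_e; apply/eqP; rewrite eqn_dvd (prim_order_dvd prim_d).
by rewrite (prim_order_dvd prim_e) (prim_expr_order prim_d) (prim_expr_order prim_e) eqxx.
Qed.

Local Notation intC := (map_poly (intr : int -> algC)).

Lemma root_intC_Cyclotomic d z : (0 < d)%N -> root (intC 'Phi_d) z = d.-primitive_root z.
Proof.
move=> d_gt0; have [z0 prim_z0] := C_prim_root_exists d_gt0.
by rewrite (Cintr_Cyclotomic prim_z0) (root_cyclotomic prim_z0).
Qed.

Lemma coprimep_intC_Cyclotomic d e : (0 < d)%N -> (0 < e)%N -> d != e ->
  coprimep (intC 'Phi_d) (intC 'Phi_e).
Proof.
move=> d_gt0 e_gt0; apply: contraNT => /not_coprimep_common_root [z /andP[]].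
by rewrite !root_intC_Cyclotomic // => prim_d prim_e; rewrite (primitive_root_order_inj prim_d prim_e).
Qed.

(* [intC 'Phi_d] is the minimal polynomial of the primitive [d]-th roots. *)
Lemma intC_Cyclotomic_dvdp d z (P : {poly int}) :
  d.-primitive_root z -> root (intC P) z -> intC 'Phi_d %| intC P.
Proof.
move=> prim_z root_z; have [pz [Dpz _] min_pz] := minCpolyP z.
have -> : intC P = map_poly ratr (map_poly (intr : int -> rat) P).
  by rewrite -map_poly_comp; apply: eq_map_poly => x /=; rewrite rmorph_int.
rewrite (Cintr_Cyclotomic prim_z) -(minCpoly_cyclotomic prim_z) Dpz dvdp_map -min_pz.
by rewrite -map_poly_comp (eq_map_poly (fun x => rmorph_int ratr x)).
Qed.

Lemma intC_dvdp_eqp_prod_Cyclotomic (P : {poly int}) p : (0 < p)%N ->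
  intC P %| intC ('X^p - 1) ->
  intC P %= \prod_(d <- divisors p | ~~ coprimep (intC P) (intC 'Phi_d)) intC 'Phi_d.
Proof.
move=> p_gt0 dvd_P; pose a d := ~~ coprimep (intC P) (intC 'Phi_d).
have div_gt0 d : d \in divisors p -> (0 < d)%N.
  by rewrite -dvdn_divisors // => /dvdn_gt0; apply.
apply/andP; split.
  move: dvd_P; rewrite -prod_Cyclotomic // rmorph_prod (bigID a) /=.
  rewrite Gauss_dvdpl // -big_filter; apply: coprimep_prodr => d.
  by rewrite mem_filter => /andP[/negbNE].
rewrite -big_filter; apply: pairwise_coprimep_prod_dvdp.
- exact/filter_uniq/divisors_uniq.
- move=> d e; rewrite !mem_filter => /andP[_ /div_gt0 d_gt0] /andP[_ /div_gt0 e_gt0].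
  exact: coprimep_intC_Cyclotomic.
move=> d; rewrite mem_filter => /andP[/not_coprimep_common_root [z /andP[root_Pz]]].
by move=> + /div_gt0 d_gt0; rewrite root_intC_Cyclotomic // => /intC_Cyclotomic_dvdp; apply.
Qed.

Lemma intC_eqp_monic (P Q : {poly int}) : Q \is monic -> intC P %= intC Q ->
  P = (lead_coef P)%:P * Q.
Proof.
move=> Q_monic /eqpfP P_eq; have intC_inj : injective (intr : int -> algC) := intr_inj.
apply: (map_inj_poly intC_inj) => //; rewrite rmorphM /= map_polyC /= mul_polyC P_eq.
by rewrite !lead_coef_map_inj // (monicP Q_monic) rmorph1 divr1.
Qed.

Lemma dvdp_one_sub_Xn_Cyclotomic (P q : {poly int}) p : (0 < p)%N ->
  1 - 'X^p = q * P -> P`_0 = 1 ->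
  exists (s : seq nat) (b : bool), uniq s /\ all (fun d => 0 < d)%N s /\
     P = (-1) ^+ b * \prod_(d <- s) 'Phi_d.
Proof.
move=> p_gt0 eq_qP P0.
pose s := [seq d <- divisors p | ~~ coprimep (intC P) (intC 'Phi_d)].
have s_gt0 : all (fun d => 0 < d)%N s.
  by apply/allP => d; rewrite mem_filter -dvdn_divisors // => /andP[_ /dvdn_gt0]; apply.
have dvd_P : intC P %| intC ('X^p - 1).
  by rewrite -opprB rmorphN dvdpNr eq_qP rmorphM dvdp_mull.
have prod_monic : \prod_(d <- s) 'Phi_d \is monic.
  by apply: monic_prod => d _; apply: Cyclotomic_monic.
have := intC_dvdp_eqp_prod_Cyclotomic p_gt0 dvd_P; rewrite -big_filter -/s -rmorph_prod.
move=> /(intC_eqp_monic prod_monic) P_eq.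
have lc_unit : lead_coef P \is a GRing.unit.
  by apply/unitrPr; exists ((\prod_(d <- s) 'Phi_d)`_0); rewrite -coefCM -P_eq P0.
have s_uniq : uniq s by exact/filter_uniq/divisors_uniq.
exists s; case/orP: lc_unit => /eqP lc_eq; [exists false | exists true];
  by do !split=> //; rewrite {1}P_eq lc_eq ?expr0 ?expr1 ?polyCN polyC1.
Qed.

Lemma Cyclotomic_prod_dvdp_one_sub_Xn (s : seq nat) (b : bool) :
  uniq s -> all (fun d => 0 < d)%N s ->
  exists p, (1 <= p)%N /\
    exists q : {poly int}, 1 - 'X^p = q * ((-1) ^+ b * \prod_(d <- s) 'Phi_d).
Proof.
move=> s_uniq /allP s_gt0; pose p := (\prod_(d <- s) d)%N.
have p_gt0 : (0 < p)%N by rewrite /p big_seq prodn_cond_gt0.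
exists p; split=> //; exists (- ((-1) ^+ b * \prod_(d <- divisors p | d \notin s) 'Phi_d)).
have prod_s : \prod_(d <- divisors p | d \in s) 'Phi_d = \prod_(d <- s) 'Phi_d.
  rewrite -big_filter; apply/perm_big/uniq_perm => //; first exact/filter_uniq/divisors_uniq.
  move=> d; rewrite mem_filter -dvdn_divisors //; case ds: (d \in s) => //=.
  by rewrite /p (big_rem d ds) dvdn_mulr.
have sign2 : ((-1) ^+ b * (-1) ^+ b : {poly int}) = 1.
  by case: b; rewrite ?expr0 ?expr1 ?mulr1 ?mulrNN ?mulr1.
rewrite -opprB -(prod_Cyclotomic p_gt0) (bigID (mem s)) /= prod_s.
by rewrite mulNr mulrACA sign2 mul1r mulrC.
Qed.

Section RodSets.
Variables (T : eqType) (R : rodset T).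

Lemma trains_auxS f n : trains_aux R f.+1 n.+1 =
  flatten [seq [seq ((k, cs.1, cs.2) : rod T) :: t
                 | cs <- rods R k, t <- trains_aux R f (n.+1 - k)]
           | k <- iota 1 n.+1].
Proof. by []. Qed.

Lemma trains_aux_fuel f1 f2 n : (n <= f1)%N -> (n <= f2)%N ->
  trains_aux R f1 n = trains_aux R f2 n.
Proof.
elim: f1 f2 n => [|f1 IHf] [|f2] [|n] // le_f1 le_f2.
rewrite !trains_auxS.
congr flatten; apply/eq_in_map => k; rewrite mem_iota => /andP[k_gt0 k_le].
by rewrite (IHf f2) //; lia.
Qed.

Lemma sum_sign_count (s : seq (T * bool)) :
  \sum_(cs <- s) (-1) ^+ cs.2 =
  (count (fun cs : T * bool => ~~ cs.2) s)%:Z - (count (fun cs : T * bool => cs.2) s)%:Z.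
Proof.
elim: s => [|[c b] s IHs]; first by rewrite big_nil.
by rewrite big_cons IHs; case: b => /=; rewrite ?add0n ?add1n ?intS; ring.
Qed.

Lemma Crod0 : Crod R 0 = 0.
Proof. by rewrite /Crod rods0. Qed.

Lemma Frod0 : Frod R 0 = 1.
Proof. by rewrite /Frod /trains /= big_cons big_nil /train_sign /= addr0. Qed.

(* Splitting a train into its first rod and the rest. *)
Lemma Frod_iota n :
  Frod R n.+1 = \sum_(k <- iota 1 n.+1) Crod R k * Frod R (n.+1 - k).
Proof.
rewrite /Frod /trains trains_auxS big_flatten big_map; apply: eq_big_seq => k.
rewrite mem_iota => /andP[k_gt0 k_le]; rewrite big_allpairs_dep /= /Crod -sum_sign_count.
rewrite big_distrl /=; apply: eq_bigr => cs _; rewrite big_distrr /=.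
rewrite (@trains_aux_fuel n (n.+1 - k) (n.+1 - k)); [|lia|lia].
by apply: eq_bigr => t _; rewrite /train_sign /= exprD.
Qed.

Lemma Frod_conv n : (0 < n)%N ->
  Frod R n = \sum_(j < n.+1) Crod R j * Frod R (n - j).
Proof.
case: n => // n _; rewrite Frod_iota.
rewrite -(big_mkord xpredT (fun j => Crod R j * Frod R (n.+1 - j))).
by rewrite big_ltn // Crod0 mul0r add0r /index_iota subn1.
Qed.

Variable m : nat.
Hypotheses (hm : Crod R m != 0) (hmax : forall n, (m < n)%N -> Crod R n = 0).

Lemma max_rod_gt0 : (0 < m)%N.
Proof. by case: m hm => //; rewrite Crod0 eqxx. Qed.

Lemma coef_one_sub_Cpoly j : (1 - Cpoly R m)`_j = (j == 0%N)%:R - Crod R j.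
Proof.
rewrite coefB coef1 /Cpoly coef_poly; case: ltnP => // le_mj.
by rewrite hmax // subr0.
Qed.

Lemma size_one_sub_Cpoly : size (1 - Cpoly R m) = m.+1.
Proof.
rewrite addrC size_polyDl size_polyN /Cpoly size_poly_eq //.
by rewrite size_poly1 ltnS max_rod_gt0.
Qed.

Lemma Frod_series_inv n :
  \sum_(j < n.+1) (1 - Cpoly R m)`_j * Frod R (n - j) = (n == 0%N)%:R.
Proof.
under eq_bigr do rewrite coef_one_sub_Cpoly mulrBl.
rewrite sumrB big_ord_recl subn0 mul1r big1 => [|i _]; last by rewrite mul0r.
case: n => [|n]; first by rewrite big_ord_recl big_ord0 Crod0 Frod0.
by rewrite addr0 -Frod_conv // subrr.
Qed.

Lemma Frod_rec n :
  Frod R (n + m) = \sum_(i < m) Crod R i.+1 * Frod R (n + (m - i.+1)).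
Proof.
rewrite Frod_conv ?addn_gt0 ?max_rod_gt0 ?orbT // big_ord_recl Crod0 mul0r add0r.
rewrite (big_ord_widen (n + m) (fun i => Crod R i.+1 * Frod R (n + (m - i.+1))))
  ?leq_addl // [RHS]big_mkcond; apply: eq_bigr => i _; rewrite lift0.
by case: ltnP => [lt_im|le_mi]; [rewrite addnBA | rewrite hmax ?mul0r].
Qed.

End RodSets.

Theorem mainTheorem14 (T : eqType) (R : rodset T) (m : nat)
  (hm : Crod R m != 0) (hmax : forall n : nat, (m < n)%N -> Crod R n = 0) :
  [<->
   exists p N : nat, (0 < p)%N /\ forall n : nat, (N <= n)%N -> Frod R (n + p) = Frod R n;
   exists B : int, forall n : nat, `|Frod R n| <= B;
   exists a a' : nat, (a < a')%N /\
     forall j : nat, (j < m)%N -> Frod R (a + j) = Frod R (a' + j);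
   exists p : nat, (0 < p)%N /\ forall n : nat, Frod R (n + p) = Frod R n;
   exists p : nat, (1 <= p)%N /\
     exists q : {poly int}, 1 - 'X^p = q * (1 - Cpoly R m);
   exists (s : seq nat) (b : bool), uniq s /\ all (fun d => 0 < d)%N s /\
     1 - Cpoly R m = (-1) ^+ b * \prod_(d <- s) 'Phi_d;
   exists m' : nat, (1 <= m')%N /\
     Gseries R = mul_series (series_of_poly (\poly_(k < m') Frod R k))
                            (inv_one_sub_Xn m')].
Proof.
have F_inv := Frod_series_inv hmax.
have P0 : (1 - Cpoly R m)`_0 = 1 by rewrite (coef_one_sub_Cpoly hmax) Crod0 subr0.
have P_nconst : (1 < size (1 - Cpoly R m)%R)%N.
  by rewrite (size_one_sub_Cpoly hm) ltnS (max_rod_gt0 hm).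
tfae.
- by move=> [p [N [p_gt0 Fp]]]; apply: eventually_periodic_bounded p_gt0 Fp.
- by move=> [B FB]; apply: bounded_window_repeats FB.
- move=> [a [a' [lt_aa' agree]]]; exists (a' - a)%N; rewrite subn_gt0; split=> //.
  exact: windows_agree_periodic (max_rod_gt0 hm) hm (Frod_rec hm hmax) _ _ lt_aa' agree.
- move=> [p [p_gt0 Fp]]; exists p; split=> //.
  by exists (\poly_(k < p) Frod R k); exact: (periodic_one_sub_Xn (f := Frod R) F_inv Fp).
- by move=> [p [p_gt0 [q eq_q]]]; apply: dvdp_one_sub_Xn_Cyclotomic p_gt0 eq_q P0.
- move=> [s [b [s_uniq [s_gt0 P_eq]]]].
  have [p [p_gt0 [q]]] := Cyclotomic_prod_dvdp_one_sub_Xn b s_uniq s_gt0.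
  rewrite -P_eq => /(one_sub_Xn_periodic F_inv P_nconst p_gt0) Fp.
  exists p; split=> //; apply: functional_extensionality => n.
  by rewrite mul_series_inv_one_sub_Xn // -(periodic_mod p_gt0 Fp).
- move=> [p [p_gt0 G_eq]]; exists p, 0%N; split=> // n _.
  have F_mod k : Frod R k = Frod R (k %% p)%N.
    by rewrite -(mul_series_inv_one_sub_Xn (Frod R) k p_gt0) -G_eq.
  by rewrite F_mod modnDr -F_mod.
Qed.
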